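(* For the family of plane curves $y^3+3r(x)y^2-3p(x)y+2q(x)=0$ parametrised by triples $(p,q,r)$ of univariate polynomials, the cuspidal component of the discriminant is the zero set of the resultant of $p(x)+r(x)^2$ and $2q(x)-r(x)^3$ with respect to $x$. Moreover, if $$p(x)=\sum_{i=0}^d\lambda_ix^i,\quad q(x)=x^n+\sum_{i=0}^{n-1}\xi_ix^i,\quad r(x)=\sum_{i=0}^{\lfloor n/3\rfloor}\zeta_ix^i,$$ then the equation of the cuspidal component, considered as a polynomial in the variable $\lambda_0$, is of degree $n$ with coprime coefficients.
   Context: The cuspidal component of the discriminant is the set of parameters $(p,q,r)$ for which the projection $(x,y)\mapsto x$ restricted to the curve has a degenerate critical point, i.e. there is a common zero of $f$, $\partial_yf$, $\partial_y^2f$ where $f=y^3+3r(x)y^2-3p(x)y+2q(x)$. The coefficients of the polynomial in $\lambda_0$ are polynomials in the remaining parameters $\lambda_i\ (i\ge1),\xi_i,\zeta_i$. *)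

From HB Require Import structures.
From mathcomp Require Import all_boot all_order all_algebra.
From mathcomp Require Import mpoly.
Set Implicit Arguments. Unset Strict Implicit. Unset Printing Implicit Defensive.
Import Order.TTheory GRing.Theory.
Local Open Scope ring_scope.

Definition fiber (C : comNzRingType) (p q r : {poly C}) (x : C) : {poly C} :=
  'X^3 + (3%:R * r.[x]) *: 'X^2 - (3%:R * p.[x]) *: 'X + (2%:R * q.[x])%:P.

Definition cuspidal (C : comNzRingType) (p q r : {poly C}) : Prop :=
  exists x y : C, [/\ root (fiber p q r x) y,
                      root (fiber p q r x)^`() y &
                      root (fiber p q r x)^`(2) y].

(* Remaining parameters: lambda_1..lambda_d, xi_0..xi_{n-1}, zeta_0..zeta_{n/3};
   they are the variables of the multivariate ring {mpoly C[nparams d n]}.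
   lambda_0 is the variable of the outer univariate ring {poly {mpoly ...}}. *)
Definition nparams (d n : nat) : nat := d + (n + (n %/ 3).+1).

Definition lam_idx d n (i : 'I_d) : 'I_(nparams d n) := lshift _ i.
Definition xi_idx d n (i : 'I_n) : 'I_(nparams d n) :=
  rshift d (lshift (n %/ 3).+1 i).
Definition zeta_idx d n (i : 'I_(n %/ 3).+1) : 'I_(nparams d n) :=
  rshift d (rshift n i).
Arguments lam_idx : clear implicits.
Arguments xi_idx : clear implicits.
Arguments zeta_idx : clear implicits.

Section Family.
Variables (C : comNzRingType) (d n : nat).
Local Notation S := {mpoly C[nparams d n]}.
Local Notation T := {poly S}.

Definition parT (k : 'I_(nparams d n)) : T := ('X_k : S)%:P.

Definition famP : {poly T} :=
  ('X : T)%:P + \sum_(i < d) (parT (lam_idx d n i))%:P * 'X^(i.+1).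
Definition famQ : {poly T} :=
  'X^n + \sum_(i < n) (parT (xi_idx d n i))%:P * 'X^i.
Definition famR : {poly T} :=
  \sum_(i < (n %/ 3).+1) (parT (zeta_idx d n i))%:P * 'X^i.

Definition cusp_eq : T :=
  resultant (famP + famR ^+ 2) (2%:R *: famQ - famR ^+ 3).
End Family.

Definition coprime_family (C : fieldType) (N : nat) (c : nat -> {mpoly C[N]}) :
  Prop :=
  forall g : {mpoly C[N]}, (forall i, exists h, c i = g * h) ->
    exists2 a : C, a != 0 & g = a%:MP.

From HB Require Import structures.
From mathcomp Require Import all_boot all_order all_algebra.
From mathcomp Require Import mpoly.
From mathcomp Require Import ring zify.
Import GRing.Theory.
Local Open Scope ring_scope.
Set Implicit Arguments. Unset Strict Implicit. Unset Printing Implicit Defensive.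

(* The second y-derivative of f vanishes only at y = -r(x), where
   d_y f = -3 (p + r^2) and f = (2q - r^3) + 3r (p + r^2); so the cusps lie
   exactly over the common roots of p + r^2 and 2q - r^3.

   For the family, lambda_0 enters the Sylvester matrix of lambda_0 + A(x) and
   B(x) (A = p - lambda_0 + r^2, B = 2q - r^3) only on the diagonal of the
   first deg B rows.  Hence the resultant has degree at most n in lambda_0, and
   its coefficient of lambda_0^n is lc(B)^deg A, where lc(B) = 2 - zeta^3
   (zeta the top coefficient of r) if 3 | n and lc(B) = 2 otherwise.

   A common divisor g of all coefficients divides lc(B)^deg A.  Specialise the
   parameters to polynomials in one variable t: lambda_d = 1, xi_0 = 1,
   zeta = t, all others 0.  This does not increase sizes and preserves the size
   of lc(B), hence of its divisor g.  If g were not constant, its image would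
   vanish at some rho with rho^3 = 2 (and 3 | n).  But at t = rho the
   polynomial B becomes the constant 2 while lambda_0 + A keeps its degree, so
   the constant coefficient of the resultant does not vanish there. *)

Section Fiber.
Variables (C : fieldType) (p q r : {poly C}) (x : C).

Lemma horner_fiber y :
  (fiber p q r x).[y] =
  y ^+ 3 + 3%:R * r.[x] * y ^+ 2 - 3%:R * p.[x] * y + 2%:R * q.[x].
Proof. by rewrite /fiber !hornerE. Qed.

Lemma horner_fiber_Nr :
  (fiber p q r x).[- r.[x]] =
  (2%:R *: q - r ^+ 3).[x] + 3%:R * r.[x] * (p + r ^+ 2).[x].
Proof. by rewrite horner_fiber !(hornerD, hornerN, hornerZ, horner_exp); ring. Qed.

Lemma horner_fiber_deriv_Nr :
  (fiber p q r x)^`().[- r.[x]] = - 3%:R * (p + r ^+ 2).[x].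
Proof.
have -> : (fiber p q r x)^`().[- r.[x]] =
    3%:R * (- r.[x]) ^+ 2 + 2%:R * 3%:R * r.[x] * - r.[x] - 3%:R * p.[x].
  by rewrite /fiber !derivE !hornerE /=; ring.
by rewrite !(hornerD, horner_exp); ring.
Qed.

Lemma horner_fiber_deriv2 y :
  (fiber p q r x)^`(2).[y] = 2%:R * 3%:R * (y + r.[x]).
Proof. by rewrite /fiber /= !derivE !hornerE /=; ring. Qed.
End Fiber.

Lemma cuspidalP (C : fieldType) (p q r : {poly C}) :
  2%:R != 0 :> C -> 3%:R != 0 :> C ->
  cuspidal p q r <-> exists x, root (p + r ^+ 2) x /\ root (2%:R *: q - r ^+ 3) x.
Proof.
move=> two_neq0 three_neq0; split=> [[x [y [f0 f1 f2]]]|[x [/eqP A0 /eqP B0]]].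
  have y_def : y = - r.[x].
    move: f2; rewrite /root horner_fiber_deriv2 !mulf_eq0 (negbTE two_neq0).
    by rewrite (negbTE three_neq0) addr_eq0 => /eqP.
  rewrite {}y_def in f0 f1.
  have A0 : root (p + r ^+ 2) x.
    by move: f1; rewrite /root horner_fiber_deriv_Nr mulf_eq0 oppr_eq0 (negbTE three_neq0).
  exists x; split => //.
  by move: f0; rewrite /root horner_fiber_Nr (eqP A0) mulr0 addr0.
exists x, (- r.[x]); rewrite /root horner_fiber_deriv2 horner_fiber_deriv_Nr horner_fiber_Nr.
by rewrite A0 B0 addNr !mulr0 add0r eqxx.
Qed.

Lemma resultant_eq0_iff (C : closedFieldType) (a b : {poly C}) :
  (a != 0) || (b != 0) -> resultant a b = 0 <-> exists x, root a x /\ root b x.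
Proof.
move=> ab_neq0; rewrite (rwP eqP) resultant_eq0; split=> [gcd_gt1|[x [ax bx]]].
  have /closed_rootP [x gx] : size (gcdp a b) != 1%N by rewrite gtn_eqF.
  by exists x; split; apply: root_dvdp gx; rewrite (dvdp_gcdl, dvdp_gcdr).
have : ('X - x%:P) %| gcdp a b by rewrite dvdp_gcd !dvdp_XsubCl ax bx.
by move/(dvdp_leq _); rewrite gcdp_eq0 negb_and size_XsubC => /(_ ab_neq0).
Qed.

(** * Top coefficients of products and determinants *)

Lemma size_eq_top_coef (R : nzSemiRingType) (p : {poly R}) k :
  (size p <= k.+1)%N -> p`_k != 0 -> size p = k.+1.
Proof.
move=> size_p pk_neq0; apply/eqP; rewrite eqn_leq size_p ltnNge.
by apply: contra pk_neq0 => /leq_sizeP ->.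
Qed.

Section TopCoefficients.
Variable R : comNzRingType.

Lemma coefM_size_leq (p q : {poly R}) a b :
  (size p <= a.+1)%N -> (size q <= b.+1)%N -> (p * q)`_(a + b) = p`_a * q`_b.
Proof.
move=> sp sq; rewrite coefM (bigD1 (Ordinal (leq_addr b a : (a < (a + b).+1)%N))) //=.
rewrite addKn big1 ?addr0 // => j j_neq_a.
have {}j_neq_a : (j : nat) != a by apply: contraNneq j_neq_a => ja; apply/eqP/val_inj.
have [j_lt_a | a_le_j] := ltnP j a.
  by rewrite [q`__](leq_sizeP _ _ sq) ?mulr0 //; lia.
by rewrite [p`__](leq_sizeP _ _ sp) ?mul0r //; lia.
Qed.

Lemma coef_exp_size_leq (p : {poly R}) a k :
  (size p <= a.+1)%N -> (p ^+ k)`_(a * k) = p`_a ^+ k.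
Proof.
move=> size_p; elim: k => [|k IH]; first by rewrite muln0 !expr0 coefC.
rewrite !exprS mulnS coefM_size_leq ?IH //.
have deg_p : ((size p).-1 <= a)%N by rewrite -subn1 leq_subLR add1n.
by apply: leq_trans (size_poly_exp_leq _ _) _; rewrite ltnS leq_mul.
Qed.

Section Weights.
Variables (I : Type) (F : I -> {poly R}) (w : I -> nat).
Hypothesis size_F : forall i, (size (F i) <= (w i).+1)%N.

Lemma size_prod_leq_weights (r : seq I) :
  (size (\prod_(i <- r) F i)%R <= (\sum_(i <- r) w i).+1)%N.
Proof.
elim: r => [|i r IH]; first by rewrite !big_nil size_poly1.
rewrite !big_cons; apply: leq_trans (size_mul_leq _ _) _.
by move: (size_F i) IH; lia.
Qed.

Lemma coef_prod_weights (r : seq I) :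
  (\prod_(i <- r) F i)`_(\sum_(i <- r) w i) = \prod_(i <- r) (F i)`_(w i).
Proof.
elim: r => [|i r IH]; first by rewrite !big_nil coefC.
by rewrite !big_cons coefM_size_leq ?IH ?size_prod_leq_weights.
Qed.
End Weights.

Section DetWeights.
Variables (N : nat) (M : 'M[{poly R}]_N) (w : 'I_N -> nat).
Hypothesis size_M : forall i j, (size (M i j) <= (w i).+1)%N.

Lemma size_det_leq_weights : (size (\det M) <= (\sum_i w i).+1)%N.
Proof.
apply: (leq_trans (size_sum _ _ _)); apply/bigmax_leqP => s _.
by rewrite size_Msign size_prod_leq_weights.
Qed.

Lemma coef_det_weights :
  (\det M)`_(\sum_i w i) = \det (\matrix_(i, j) (M i j)`_(w i)).
Proof.
rewrite coef_sum; apply: eq_bigr => s _.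
rewrite -(rmorph_sign (@polyC R)) coefCM coef_prod_weights //.
by congr (_ * _); apply: eq_bigr => i _; rewrite mxE.
Qed.
End DetWeights.
End TopCoefficients.

Section ResultantXaddC.
Variables (R : comNzRingType) (a b : {poly R}).
Let p : {poly {poly R}} := 'X%:P + a^:P.
Let q : {poly {poly R}} := b^:P.
Let dq := (size q).-1.
Let dp := (size p).-1.
(* 'X stands for lambda_0; it occurs, linearly, only in the rows coming from p. *)
Let w (i : 'I_(dq + dp)) : nat := if split i is inl _ then 1%N else 0%N.

Let size_q : size q = size b. Proof. exact: size_map_polyC. Qed.

Let sum_w : (\sum_i w i)%N = (size b).-1.
Proof.
rewrite big_split_ord /= (eq_bigr (fun _ => 1%N)) => [|i _]; last first.
  by rewrite /w (unsplitK (inl _ i)).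
rewrite [X in (_ + X)%N]big1 => [|i _]; last by rewrite /w (unsplitK (inr _ i)).
by rewrite sum1_card card_ord addn0 /dq size_q.
Qed.

Let Sylvester_XaddCE i j :
  Sylvester_mx p q i j = match split i with
    | inl k => p`_(j - k) *+ (k <= j)%N
    | inr k => q`_(j - k) *+ (k <= j)%N end.
Proof. exact: Sylvester_mxE. Qed.

Let coef_XaddC m : p`_m = (if m == 0%N then 'X else 0) + (a`_m)%:P.
Proof. by rewrite coefD coefC coef_map. Qed.

Let size_Sylvester_XaddC i j : (size (Sylvester_mx p q i j) <= (w i).+1)%N.
Proof.
rewrite Sylvester_XaddCE /w; case: (split i) => k; case: (k <= j)%N;
  rewrite ?mulr0n ?size_poly0 // mulr1n.
  rewrite coef_XaddC; apply: (leq_trans (size_polyD _ _)); rewrite geq_max size_polyC.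
  by case: (_ == _); case: (_ != _); rewrite ?size_polyX ?size_poly0.
by rewrite coef_map size_polyC leq_b1.
Qed.

Lemma size_resultant_XaddC : (size (resultant p q) <= (size b).-1.+1)%N.
Proof. by rewrite -sum_w; apply: size_det_leq_weights size_Sylvester_XaddC. Qed.

Lemma coef_resultant_XaddC : (resultant p q)`_(size b).-1 = lead_coef b ^+ dp.
Proof.
rewrite -sum_w coef_det_weights; last exact: size_Sylvester_XaddC.
set T := \matrix_(i, j) _.
have TE i j : T i j = (Sylvester_mx p q i j)`_(w i) by rewrite mxE.
clearbody T.
have T_ul : ulsubmx T = 1%:M.
  apply/matrixP => k l; rewrite !mxE TE Sylvester_XaddCE /w (unsplitK (inl _ k)).
  rewrite coefMn coef_XaddC coefD coefC -val_eqE /=.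
  have [k_lt_l | l_lt_k | <-] := ltngtP k l.
  - by rewrite subn_eq0 leqNgt k_lt_l /= coef0 addr0 mul0rn.
  - by rewrite /= mulr0n.
  - by rewrite /= subnn eqxx coefX addr0.
have T_ur : ursubmx T = 0.
  apply/matrixP => k l; rewrite !mxE TE Sylvester_XaddCE /w (unsplitK (inl _ k)).
  rewrite coefMn coef_XaddC coefD coefC /=.
  rewrite (_ : (dq + l - k == 0)%N = false) ?coef0 ?addr0 ?mul0rn //.
  by apply/negbTE; rewrite subn_eq0 -ltnNge ltn_addr.
have T_dr_trig : is_trig_mx (drsubmx T).
  apply/is_trig_mxP => k l k_lt_l.
  rewrite !mxE TE Sylvester_XaddCE /w (unsplitK (inr _ k)) coefMn coef_map coefC /=.
  rewrite [b`__](leq_sizeP _ _ (leqnn (size b))) ?mul0rn //.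
  by move: k_lt_l; rewrite /dq size_q; case: (size b) => [|s] /=; lia.
rewrite -[T]submxK T_ul T_ur det_lblock det1 mul1r det_trig //.
rewrite (eq_bigr (fun _ => lead_coef b)) ?prodr_const ?card_ord // => k _.
rewrite !mxE TE Sylvester_XaddCE /w (unsplitK (inr _ k)) coefMn coef_map coefC.
by rewrite addnK leq_addl /dq size_q.
Qed.
End ResultantXaddC.

Lemma mul_add_mulC_eq0 (K : idomainType) (P U V : {poly K}) c :
  P != 0 -> c != 0 -> (size V < size P)%N -> U * P + V * c%:P = 0 -> U = 0 /\ V = 0.
Proof.
move=> P_neq0 c_neq0 size_V /eqP; rewrite addr_eq0 [V * _]mulrC => /eqP UP_E.
have U0 : U = 0.
  apply/eqP; apply: contraT => U_neq0; have := size_mul U_neq0 P_neq0.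
  rewrite UP_E size_opp size_Cmul //; move: size_V U_neq0; rewrite -size_poly_eq0.
  by move: (size V) (size U) (size P) => x y z; rewrite -!subn1; lia.
split=> //; move: UP_E; rewrite U0 mul0r => /esym/eqP.
by rewrite oppr_eq0 mulf_eq0 polyC_eq0 (negbTE c_neq0) => /eqP.
Qed.

(* Unlike [map_resultant], this allows q to drop degree under f. *)
Lemma det_map_Sylvester_neq0 (R : nzRingType) (K : fieldType)
    (f : {rmorphism R -> K}) (p q : {poly R}) (c : K) :
  p != 0 -> size (map_poly f p) = size p -> c != 0 -> map_poly f q = c%:P ->
  \det (map_mx f (Sylvester_mx p q)) != 0.
Proof.
move=> p_neq0 size_pf c_neq0 qf; set dq := (size q).-1; set dp := (size p).-1.
have -> : map_mx f (Sylvester_mx p q) =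
    col_mx (lin1_mx (poly_rV \o map_poly f p \o* rVpoly))
           (lin1_mx (poly_rV \o c%:P \o* @rVpoly _ dp)) :> 'M_(dq + dp).
  rewrite /Sylvester_mx map_col_mx; congr col_mx; apply: map_lin1_mx => v;
    by rewrite map_poly_rV rmorphM /= map_rVpoly ?qf.
have pf_neq0 : map_poly f p != 0 by rewrite -size_poly_eq0 size_pf size_poly_eq0.
have size_p_gt0 : (0 < size p)%N by rewrite size_poly_gt0.
apply/det0P => -[v v_neq0]; rewrite -[v]hsubmxK mul_row_col !mul_rV_lin1 /=.
set U := rVpoly (lsubmx v); set V := rVpoly (rsubmx v).
have size_U : (size U <= dq)%N by apply: size_poly.
have size_V : (size V <= dp)%N by apply: size_poly.
rewrite -linearD /= => /(congr1 rVpoly); rewrite linear0 poly_rV_K; last first.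
  apply: (leq_trans (size_polyD _ _)); rewrite geq_max [V * _]mulrC size_Cmul // andbC.
  rewrite (leq_trans size_V) ?leq_addl //=; apply: (leq_trans (size_mul_leq _ _)).
  by move: size_U; rewrite size_pf /dp; move: (size U) (size p) => x y; rewrite -!subn1; lia.
case/mul_add_mulC_eq0 => //; first by rewrite size_pf /dp; move: size_V size_p_gt0; lia.
move=> U0 V0; move: v_neq0; rewrite -[v]hsubmxK -(rVpolyK (lsubmx v)).
by rewrite -(rVpolyK (rsubmx v)) -/U -/V U0 V0 !linear0 row_mx0 eqxx.
Qed.

(** * The family of cubics *)

Section SumScaleXn.
Variables (R : nzRingType) (k : nat) (c : 'I_k -> R) (e : 'I_k -> nat).

Lemma size_sumZXn_leq b : (forall i, e i <= b)%N ->
  (size (\sum_(i < k) c i *: 'X^(e i))%R <= b.+1)%N.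
Proof.
move=> e_le; apply: (leq_trans (size_sum _ _ _)); apply/bigmax_leqP => i _.
by apply: (leq_trans (size_scale_leq _ _)); rewrite size_polyXn ltnS.
Qed.

Lemma coef_sumZXn j : (\sum_(i < k) c i *: 'X^(e i))`_j = \sum_(i < k | e i == j) c i.
Proof. exact: coef_sumMXn. Qed.

Lemma map_poly_sumZXn (S : nzRingType) (f : {rmorphism R -> S}) :
  map_poly f (\sum_(i < k) c i *: 'X^(e i)) = \sum_(i < k) f (c i) *: 'X^(e i).
Proof.
rewrite rmorph_sum; apply: eq_bigr => i _.
by rewrite -mul_polyC rmorphM /= map_polyC map_polyXn mul_polyC.
Qed.
End SumScaleXn.

Section Family.
Variables (C : fieldType) (d n : nat).
Local Notation S := {mpoly C[nparams d n]}.
Local Notation m := (n %/ 3)%N.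

Definition famPS : {poly S} := \sum_(i < d) 'X_(lam_idx d n i) *: 'X^(i.+1).
Definition famQS : {poly S} := 'X^n + \sum_(i < n) 'X_(xi_idx d n i) *: 'X^i.
Definition famRS : {poly S} := \sum_(i < m.+1) 'X_(zeta_idx d n i) *: 'X^i.
Definition famA : {poly S} := famPS + famRS ^+ 2.
Definition famB : {poly S} := 2%:R *: famQS - famRS ^+ 3.

Lemma cusp_eqE : cusp_eq C d n = resultant ('X%:P + famA^:P) famB^:P.
Proof.
rewrite /cusp_eq /famP /famQ /famR /famA /famB /parT /famPS /famQS /famRS.
rewrite !scaler_nat rmorphD rmorphB rmorphMn !rmorphXn rmorphD /= !map_poly_sumZXn.
by rewrite map_polyXn addrA !(eq_bigr _ (fun i _ => mul_polyC _ _)).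
Qed.

Definition zeta_top : 'I_(nparams d n) := zeta_idx d n ord_max.

Definition cusp_lead : S := if (3 %| n)%N then 2%:R - 'X_zeta_top ^+ 3 else 2%:R.

Lemma size_famRS_leq : (size famRS <= m.+1)%N.
Proof. by apply: size_sumZXn_leq => i; rewrite -ltnS. Qed.

Lemma coef_famRS_top : famRS`_m = 'X_zeta_top.
Proof. by rewrite coef_sumZXn (big_pred1 ord_max) // => i; rewrite -val_eqE. Qed.

Lemma coef_famQS_top : famQS`_n = 1.
Proof.
by rewrite coefD coefXn eqxx coef_sumZXn big_pred0 ?addr0 // => i; rewrite ltn_eqF.
Qed.

Lemma coef_famB_top : famB`_n = cusp_lead.
Proof.
rewrite coefB coefZ coef_famQS_top mulr1 /cusp_lead; case: ifP => [/divnK n_eq | n_ndvd].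
  by rewrite -[X in nth _ _ X]n_eq coef_exp_size_leq ?size_famRS_leq // coef_famRS_top.
have /leq_sizeP high_coef0 : (size (famRS ^+ 3) <= n)%N.
  apply: leq_trans (size_poly_exp_leq _ _) _.
  have := leq_trunc_div n 3; have : (n %/ 3 * 3 != n)%N.
    by apply: contraFneq n_ndvd => <-; rewrite dvdn_mull.
  by move: size_famRS_leq; move: (size famRS) => s; rewrite -subn1; lia.
by rewrite high_coef0 ?subr0.
Qed.

Lemma size_famB_leq : (size famB <= n.+1)%N.
Proof.
apply: (leq_trans (size_polyD _ _)); rewrite geq_max size_opp.
rewrite (leq_trans (size_scale_leq _ _)) /=; last first.
  apply: (leq_trans (size_polyD _ _)); rewrite geq_max size_polyXn leqnn /=.
  by apply: size_sumZXn_leq => i; apply: ltnW.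
apply: leq_trans (size_poly_exp_leq _ _) _; have := leq_trunc_div n 3.
by move: size_famRS_leq; move: (size famRS) => s; rewrite -subn1; lia.
Qed.

Lemma size_famA_leq : (size famA <= (maxn d (m * 2)).+1)%N.
Proof.
apply: (leq_trans (size_polyD _ _)); rewrite geq_max; apply/andP; split.
  by apply: size_sumZXn_leq => i; rewrite leq_max ltn_ord.
apply: leq_trans (size_poly_exp_leq _ _) _.
move: size_famRS_leq (leq_maxr d (m * 2)); move: (size famRS) => s.
by rewrite -subn1; lia.
Qed.
End Family.

Section TopCoefficient.
Variables (C : fieldType) (d n : nat).
Hypothesis two_neq0 : 2%:R != 0 :> C.

Lemma cusp_lead_neq0 : cusp_lead C d n != 0.
Proof.
apply: contra_neq two_neq0 => /(congr1 (meval (fun=> 0))).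
rewrite /cusp_lead meval0; case: ifP => _;
  by rewrite ?rmorphB ?rmorphXn /= ?mevalXU ?expr0n ?subr0 -mpolyC_nat mevalC.
Qed.

Lemma size_famB : size (famB C d n) = n.+1.
Proof.
by rewrite (size_eq_top_coef (size_famB_leq _ _ _)) // coef_famB_top cusp_lead_neq0.
Qed.

Lemma lead_coef_famB : lead_coef (famB C d n) = cusp_lead C d n.
Proof. by rewrite lead_coefE size_famB coef_famB_top. Qed.

Lemma coef_cusp_eq_top :
  (cusp_eq C d n)`_n = cusp_lead C d n ^+ (size ('X%:P + (famA C d n)^:P)).-1.
Proof. by rewrite cusp_eqE -lead_coef_famB -coef_resultant_XaddC size_famB. Qed.

Lemma size_cusp_eq : size (cusp_eq C d n) = n.+1.
Proof.
apply: size_eq_top_coef; last by rewrite coef_cusp_eq_top expf_neq0 ?cusp_lead_neq0.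
rewrite cusp_eqE; have := size_resultant_XaddC (famA C d n) (famB C d n).
by rewrite size_famB.
Qed.
End TopCoefficient.

(** * Specialisation to one variable *)

Section SizePreserving.
Variables (K : idomainType) (N : nat) (tau : {rmorphism {mpoly K[N]} -> {poly K}}).

Lemma size_tau_exp_eq p k : tau p != 0 ->
  size (tau p) = msize p -> size (tau (p ^+ k)) = msize (p ^+ k).
Proof.
move=> tp_neq0 size_tp.
have p_neq0 : p != 0 by apply: contraNneq tp_neq0 => ->; rewrite rmorph0.
elim: k => [|k IH]; first by rewrite !expr0 rmorph1 size_poly1 msize1.
rewrite exprS rmorphM /= size_mul ?rmorphXn ?expf_neq0 // msizeM ?expf_neq0 //.
by rewrite size_tp -rmorphXn IH.
Qed.

Hypothesis size_tau_leq : forall p, (size (tau p) <= msize p)%N.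

Lemma size_tau_mul_eq p q : tau (p * q) != 0 ->
  size (tau (p * q)) = msize (p * q) -> size (tau p) = msize p.
Proof.
rewrite rmorphM /= mulf_eq0 negb_or => /andP [tp_neq0 tq_neq0].
have [p_neq0 q_neq0] : p != 0 /\ q != 0.
  by split; [apply: contraNneq tp_neq0 | apply: contraNneq tq_neq0] => ->; rewrite rmorph0.
rewrite size_mul // msizeM //.
move: (size_tau_leq p) (size_tau_leq q) (size_poly_gt0 (tau p)) (size_poly_gt0 (tau q)).
rewrite tp_neq0 tq_neq0; move: (size (tau p)) (size (tau q)) (msize p) (msize q).
by move=> a b c e; rewrite -!subn1; lia.
Qed.
End SizePreserving.

Section AffineSpecialization.
Variables (K : comNzRingType) (N : nat) (h : 'I_N -> {poly K}).

Lemma size_mmap_polyC_leq p :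
  (forall i, size (h i) <= 2)%N -> (size (mmap (@polyC K) h p) <= msize p)%N.
Proof.
move=> size_h; rewrite (mmapE _ (leqnn (msize p))).
apply: (leq_trans (size_sum _ _ _)); apply/bigmax_leqP => m _.
rewrite mul_polyC; apply: (leq_trans (size_scale_leq _ _)).
apply: leq_trans (bmdeg m); rewrite mdegE.
apply: size_prod_leq_weights => i; apply: leq_trans (size_poly_exp_leq _ _) _.
rewrite ltnS; move: (size_h i).
by case: (size (h i)) => [|[|[|]]] //= _; rewrite ?mul0n ?mul1n.
Qed.

Lemma horner_mmap_polyC p x : (mmap (@polyC K) h p).[x] = p.@[fun i => (h i).[x]].
Proof.
rewrite /mmap mevalE horner_sum; apply: eq_bigr => m _; rewrite hornerM hornerC.
by rewrite /mmap1 horner_prod; congr (_ * _); apply: eq_bigr => i _; rewrite hornerE.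
Qed.
End AffineSpecialization.

Section ParamValues.
Variables (d n : nat).
Local Notation N := (nparams d n).

Definition param_val (T : Type) (fl : 'I_d -> T) (fx : 'I_n -> T)
    (fz : 'I_(n %/ 3).+1 -> T) (i : 'I_N) : T :=
  match split i with
  | inl j => fl j
  | inr k => match split k with inl j => fx j | inr j => fz j end
  end.

Lemma param_val_lam T fl fx fz j : @param_val T fl fx fz (lam_idx d n j) = fl j.
Proof. by rewrite /param_val /lam_idx (unsplitK (inl _ j)). Qed.

Lemma param_val_xi T fl fx fz j : @param_val T fl fx fz (xi_idx d n j) = fx j.
Proof. by rewrite /param_val /xi_idx (unsplitK (inr _ _)) (unsplitK (inl _ j)). Qed.

Lemma param_val_zeta T fl fx fz j : @param_val T fl fx fz (zeta_idx d n j) = fz j.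
Proof. by rewrite /param_val /zeta_idx (unsplitK (inr _ _)) (unsplitK (inr _ j)). Qed.

Definition cusp_spec (R : nzSemiRingType) (t : R) : 'I_N -> R :=
  param_val (fun j : 'I_d => (j.+1 == d)%:R) (fun j : 'I_n => (j == 0 :> nat)%:R)
    (fun j => if j == ord_max then t else 0).

Lemma size_cusp_spec_X (K : nzRingType) i : (size (cusp_spec ('X : {poly K}) i) <= 2)%N.
Proof.
rewrite /cusp_spec /param_val; case: split => [j|k]; last case: split => [j|j].
- by case: (_ == _); rewrite ?size_poly1 ?size_poly0.
- by case: (_ == _); rewrite ?size_poly1 ?size_poly0.
- by case: ifP; rewrite ?size_polyX ?size_poly0.
Qed.

Lemma horner_cusp_spec_X (K : comNzRingType) (x : K) i : (cusp_spec 'X i).[x] = cusp_spec x i.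
Proof.
rewrite /cusp_spec /param_val; case: split => [j|k]; last case: split => [j|j].
- by case: (_ == _); rewrite ?hornerC ?horner0 ?hornerE.
- by case: (_ == _); rewrite ?hornerC ?horner0 ?hornerE.
- by case: ifP; rewrite ?hornerX ?horner0.
Qed.
End ParamValues.
Arguments cusp_spec d n {R} t.

Section CubeRootOfTwo.
Variables (C : fieldType) (d n : nat) (rho : C).
Hypotheses (charC0 : [pchar C] =i pred0) (n_gt0 : (0 < n)%N).
Hypotheses (three_dvd_n : (3 %| n)%N) (rho3 : rho ^+ 3 = 2%:R).
Local Notation m := (n %/ 3)%N.
Local Notation D := (maxn d (m * 2)).
Local Notation ev := (map_poly (meval (cusp_spec d n rho))).

Let m_gt0 : (0 < m)%N.
Proof. by rewrite divn_gt0 // dvdn_leq. Qed.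

Lemma spec_famRS : ev (famRS C d n) = rho *: 'X^m.
Proof.
rewrite map_poly_sumZXn (bigD1 ord_max) //= big1 ?addr0 => [|i i_neq].
  by rewrite mevalXU /cusp_spec param_val_zeta eqxx.
by rewrite mevalXU /cusp_spec param_val_zeta (negbTE i_neq) scale0r.
Qed.

Lemma spec_famQS : ev (famQS C d n) = 'X^n + 1.
Proof.
rewrite rmorphD /= map_polyXn map_poly_sumZXn (bigD1 (Ordinal n_gt0)) //= big1 ?addr0.
  by rewrite mevalXU /cusp_spec param_val_xi eqxx scale1r expr0.
move=> i; rewrite -val_eqE /= => /negbTE i_neq0.
by rewrite mevalXU /cusp_spec param_val_xi i_neq0 scale0r.
Qed.

Lemma spec_famPS : ev (famPS C d n) = 'X^d *+ (0 < d)%N.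
Proof.
rewrite map_poly_sumZXn; case: d => [|d']; first by rewrite big_ord0.
rewrite big_ord_recr /= big1 ?add0r => [|i _].
  by rewrite mevalXU /cusp_spec param_val_lam eqxx scale1r.
by rewrite mevalXU /cusp_spec param_val_lam eqSS /= ltn_eqF ?scale0r.
Qed.

Lemma spec_famB : ev (famB C d n) = 2%:R.
Proof.
rewrite /famB scaler_nat rmorphB rmorphMn !rmorphXn /= spec_famQS spec_famRS -mul_polyC.
rewrite exprMn -rmorphXn rho3 -exprM divnK // rmorph_nat; ring.
Qed.

Lemma coef_spec_famA j :
  (ev (famA C d n))`_j = (j == d)%:R *+ (0 < d)%N + rho ^+ 2 * (j == m * 2)%N%:R.
Proof.
rewrite rmorphD rmorphXn /= spec_famPS spec_famRS -mul_polyC exprMn -rmorphXn -exprM.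
by rewrite coefD coefMn coefXn coefCM coefXn.
Qed.

Lemma coef_spec_famA_top : (ev (famA C d n))`_D != 0.
Proof.
have nat_neq0 k : (k.+1%:R : C) != 0 by rewrite (pcharf0P _).1.
have rho_neq0 : rho != 0.
  by apply: contra_eq_neq rho3 => ->; rewrite expr0n eq_sym nat_neq0.
rewrite coef_spec_famA; have [d_lt | d_gt | d_eq] := ltngtP d (m * 2).
- by rewrite (gtn_eqF d_lt) eqxx mul0rn add0r mulr1 expf_neq0.
- by rewrite eqxx (gtn_eqF d_gt) mulr0 addr0 (leq_ltn_trans _ d_gt) ?oner_eq0.
- rewrite d_eq eqxx muln_gt0 m_gt0 mulr1 /=; apply/eqP => rho2E.
  have rho2 : rho ^+ 2 = -1 by apply/eqP; rewrite -addr_eq0 addrC rho2E.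
  have rhoN : - rho = 2%:R by rewrite -rho3 exprSr rho2 mulN1r.
  have : ((- rho) ^+ 2 + 1 : C) = 5%:R by rewrite rhoN; ring.
  by rewrite sqrrN rho2 addNr => /esym/eqP; rewrite (negbTE (nat_neq0 4)).
Qed.

Lemma size_famA : size (famA C d n) = D.+1.
Proof.
apply: size_eq_top_coef (size_famA_leq _ _ _) _.
by apply: contra_neq coef_spec_famA_top; rewrite coef_map => ->; rewrite raddf0.
Qed.

Lemma size_spec_famA : size (ev (famA C d n)) = size (famA C d n).
Proof.
apply: size_map_poly_id0; rewrite lead_coefE size_famA /=.
by have := coef_spec_famA_top; rewrite coef_map.
Qed.

Lemma spec_coef0_cusp_eq : ((cusp_eq C d n)`_0).@[cusp_spec d n rho] != 0.
Proof.
pose f : {rmorphism {poly {mpoly C[nparams d n]}} -> C} :=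
  meval (cusp_spec d n rho) \o horner_eval 0.
have map_f (p : {poly {mpoly C[nparams d n]}}) : map_poly f p^:P = ev p.
  by apply/polyP => i; rewrite !coef_map /= horner_evalE hornerC.
have map_f_A : map_poly f ('X%:P + (famA C d n)^:P) = ev (famA C d n).
  by rewrite rmorphD /= map_f map_polyC /= horner_evalE hornerX rmorph0 add0r.
rewrite cusp_eqE -horner_coef0 -[_.@[_]]/(f (resultant _ _)) -det_map_mx.
have size_A : size ('X%:P + (famA C d n)^:P) = D.+1.
  rewrite addrC size_polyDl size_map_polyC size_famA //.
  rewrite size_polyC ltnS; apply: leq_trans (leq_b1 _) _.
  by rewrite leq_max muln_gt0 m_gt0 orbT.
apply: (det_map_Sylvester_neq0 (c := 2%:R)); rewrite ?map_f ?spec_famB ?rmorph_nat.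
- by rewrite -size_poly_eq0 size_A.
- by rewrite map_f_A size_spec_famA size_famA size_A.
- by rewrite (pcharf0P _).1.
- by [].
Qed.
End CubeRootOfTwo.

Section Coprime.
Variables (C : closedFieldType) (d n : nat).
Hypotheses (charC0 : [pchar C] =i pred0) (n_gt0 : (0 < n)%N).
Local Notation S := {mpoly C[nparams d n]}.

Let two_neq0 : 2%:R != 0 :> C. Proof. by rewrite (pcharf0P _).1. Qed.

Definition spec_poly : {rmorphism S -> {poly C}} := mmap (@polyC C) (cusp_spec d n 'X).

Lemma size_spec_poly_leq p : (size (spec_poly p) <= msize p)%N.
Proof. exact/size_mmap_polyC_leq/size_cusp_spec_X. Qed.

Lemma horner_spec_poly p x : (spec_poly p).[x] = p.@[cusp_spec d n x].
Proof. by rewrite horner_mmap_polyC; apply: meval_eq => i; rewrite horner_cusp_spec_X. Qed.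

Lemma cusp_lead_spec x :
  (cusp_lead C d n).@[cusp_spec d n x] = if (3 %| n)%N then 2%:R - x ^+ 3 else 2%:R.
Proof.
rewrite /cusp_lead; case: ifP => _; last by rewrite rmorph_nat.
by rewrite rmorphB rmorphXn rmorph_nat /= mevalXU /cusp_spec param_val_zeta eqxx.
Qed.

Lemma cusp_lead_spec_eq0 x : (cusp_lead C d n).@[cusp_spec d n x] = 0 ->
  (3 %| n)%N /\ x ^+ 3 = 2%:R.
Proof.
rewrite cusp_lead_spec; case: ifP => [three_dvd_n /eqP|_ /eqP].
  by rewrite subr_eq0 => /eqP.
by rewrite (negbTE two_neq0).
Qed.

Lemma size_spec_poly_cusp_lead : size (spec_poly (cusp_lead C d n)) = msize (cusp_lead C d n).
Proof.
apply/eqP; rewrite eqn_leq size_spec_poly_leq /= /cusp_lead; case: ifP => _; last first.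
  by rewrite rmorph_nat -mpolyC_nat msizeC -polyC_natr size_polyC.
have -> : spec_poly (2%:R - 'X_(zeta_top d n) ^+ 3) = 2%:R - 'X^3.
  by rewrite rmorphB rmorph_nat rmorphXn /= mmapX mmap1U /cusp_spec param_val_zeta eqxx.
have -> : size (2%:R - 'X^3 : {poly C}) = 4%N.
  rewrite addrC size_polyDl size_polyN size_polyXn // -polyC_natr size_polyC.
  by case: (_ != _).
apply: (leq_trans (msizeD_le _ _)); rewrite geq_max msizeN -mpolyC_nat msizeC.
by rewrite mpolyXn msizeX mdegMn mdeg1 (leq_trans (leq_b1 _)).
Qed.

Lemma coprime_cusp_eq : coprime_family (fun i => (cusp_eq C d n)`_i).
Proof.
move=> g g_dvd; have [h lead_E] := g_dvd n; have [h0 coef0_E] := g_dvd 0%N.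
rewrite coef_cusp_eq_top // in lead_E.
set k := (size _).-1 in lead_E; set L := _ ^+ k in lead_E.
have spec_lead_neq0 : spec_poly (cusp_lead C d n) != 0.
  by rewrite -size_poly_eq0 size_spec_poly_cusp_lead msize_poly_eq0 cusp_lead_neq0.
have spec_L_neq0 : spec_poly L != 0 by rewrite rmorphXn expf_neq0.
have size_spec_g : size (spec_poly g) = msize g.
  apply: (@size_tau_mul_eq _ _ _ size_spec_poly_leq g h); rewrite -lead_E //.
  exact: size_tau_exp_eq _ spec_lead_neq0 size_spec_poly_cusp_lead.
have g_neq0 : g != 0.
  by apply: contraNneq spec_L_neq0; rewrite lead_E => ->; rewrite mul0r rmorph0.
suff msize_g : (msize g <= 1)%N.
  exists g@_0; last exact: msize1_polyC.
  by apply: contra_neq g_neq0 => g0; rewrite (msize1_polyC msize_g) g0.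
rewrite -size_spec_g; case: (boolP (size (spec_poly g) != 1%N)) => [|/negPn/eqP -> //].
move=> /closed_rootP [x /eqP spec_g_x].
have : (cusp_lead C d n).@[cusp_spec d n x] ^+ k == 0.
  by rewrite -rmorphXn /= -/L -horner_spec_poly lead_E rmorphM hornerM spec_g_x mul0r.
rewrite expf_eq0 => /andP [_ /eqP /cusp_lead_spec_eq0 [three_dvd_n x3]].
have := spec_coef0_cusp_eq d charC0 n_gt0 three_dvd_n x3.
by rewrite coef0_E -horner_spec_poly rmorphM hornerM spec_g_x mul0r eqxx.
Qed.
End Coprime.

Theorem mainTheorem10 (C : closedFieldType) (charC0 : [pchar C] =i pred0) :
  (forall p q r : {poly C},
     (p + r ^+ 2 != 0) || (2%:R *: q - r ^+ 3 != 0) ->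
     (cuspidal p q r <-> resultant (p + r ^+ 2) (2%:R *: q - r ^+ 3) = 0))
  /\
  (forall d n : nat, (0 < n)%N ->
     size (cusp_eq C d n) = n.+1 /\
     coprime_family (fun i => (cusp_eq C d n)`_i)).
Proof.
have nat_neq0 k : (k.+1%:R : C) != 0 by rewrite (pcharf0P _).1.
split=> [p q r nz | d n n_gt0].
  by rewrite resultant_eq0_iff // cuspidalP ?nat_neq0.
split; first exact: size_cusp_eq (nat_neq0 1).
exact: coprime_cusp_eq.
Qed.
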